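(* Let $V$ be an integral, unimodular, symmetric, positive definite $m\times m$ matrix. Then for every $x\in\mathbb{Z}^m$, $$|x|\le \lVert V^{-1}\rVert_1\,(x^TVx).$$
   Context: $|x|$ denotes the Euclidean norm of $x$. For a real $m\times m$ matrix $A=(a_{ij})$, $\lVert A\rVert_1=\max_j\sum_{i=1}^m|a_{ij}|$ is the operator norm with respect to the $\ell^1$-norm. Unimodular means determinant $\pm1$. *)

From HB Require Import structures.
From mathcomp Require Import all_boot all_order all_algebra.
Set Implicit Arguments. Unset Strict Implicit. Unset Printing Implicit Defensive.
Import Order.TTheory GRing.Theory Num.Theory.
Local Open Scope ring_scope.

Definition eucl_norm (R : rcfType) (m : nat) (x : 'rV[R]_m) : R :=
  Num.sqrt (\sum_(i < m) x 0 i ^+ 2).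

(* Operator norm w.r.t. l^1: max_j sum_i |a_ij| (max column absolute sum). *)
Definition norm1 (R : rcfType) (m : nat) (A : 'M[R]_m) : R :=
  \big[Num.max/0]_(j < m) \sum_(i < m) `|A i j|.

Definition qform (R : comRingType) (m : nat) (A : 'M[R]_m) (x : 'rV[R]_m) : R :=
  (x *m A *m x^T) 0 0.

Definition posdef (R : rcfType) (m : nat) (A : 'M[R]_m) : Prop :=
  forall x : 'rV[R]_m, x != 0 -> 0 < qform A x.

(* Write W = V^-1 and v = x W. For the inner product <y, z> = y V z^T one has
   <x, v> = |x|^2 and <v, v> = x W x^T <= ||W||_1 |x|^2, the latter because W is
   symmetric so that its row and column sums agree. Cauchy-Schwarz for the
   positive form V then gives |x|^4 <= (x V x^T) ||W||_1 |x|^2, i.e.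
   |x|^2 <= ||W||_1 (x V x^T), and |x| <= |x|^2 as |x|^2 is a nonnegative integer. *)

From HB Require Import structures.
From mathcomp Require Import all_boot all_order all_algebra.
From mathcomp Require Import ring lra.
Set Implicit Arguments. Unset Strict Implicit. Unset Printing Implicit Defensive.
Import Order.TTheory GRing.Theory Num.Theory.
Local Open Scope ring_scope.

Definition bform (R : comNzRingType) (m : nat) (A : 'M[R]_m) (u v : 'rV[R]_m) : R :=
  (u *m A *m v^T) 0 0.

Section BilinearForm.
Variables (R : comNzRingType) (m : nat) (A : 'M[R]_m).

Lemma bform_sym (u v : 'rV[R]_m) : A^T = A -> bform A u v = bform A v u.
Proof.
move=> AT; rewrite /bform -[u *m A *m v^T]trmxK [in LHS]mxE.
by rewrite !trmx_mul trmxK AT mulmxA.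
Qed.

Lemma qform_subZ (u v : 'rV[R]_m) (t : R) : A^T = A ->
  qform A (u - t *: v) = qform A u - 2 * t * bform A u v + t ^+ 2 * qform A v.
Proof.
move=> AT; have := bform_sym u v AT; rewrite /qform /bform.
rewrite raddfB /= [(t *: v)^T]linearZ /= !mulmxBl !mulmxBr -!scalemxAl -!scalemxAr.
set a := u *m A *m u^T; set b := v *m A *m u^T; set c := u *m A *m v^T; set d := v *m A *m v^T.
by clearbody a b c d => cb; rewrite !mxE cb; ring.
Qed.

Lemma qformE (x : 'rV[R]_m) : qform A x = \sum_i \sum_j x 0 i * A i j * x 0 j.
Proof.
rewrite /qform mxE exchange_big; apply: eq_bigr => i _; rewrite mxE big_distrl /=.
by apply: eq_bigr => j _; rewrite !mxE.
Qed.

End BilinearForm.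

Lemma bform_CauchySchwarz (R : realFieldType) (m : nat) (A : 'M[R]_m) (u v : 'rV[R]_m) :
  A^T = A -> (forall w, 0 <= qform A w) ->
  bform A u v ^+ 2 <= qform A u * qform A v.
Proof.
move=> AT psdA; set a := qform A u; set b := bform A u v; set c := qform A v.
have quad t : 0 <= a - 2 * t * b + t ^+ 2 * c by rewrite -qform_subZ.
have := psdA v; rewrite -/c le_eqVlt => /orP[/eqP c0 | c_gt0].
  (* With c = 0 the quadratic in t is affine, so it can only stay nonnegative if b = 0. *)
  suff -> : b = 0 by rewrite -c0 expr0n mulr0.
  apply/eqP; apply: contraT => b_neq0.
  have := quad ((a + 1) / (2 * b)); rewrite -c0 mulr0 addr0.
  have -> : 2 * ((a + 1) / (2 * b)) * b = a + 1 by field.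
  lra.
have := quad (b / c).
have -> : a - 2 * (b / c) * b + (b / c) ^+ 2 * c = (a * c - b ^+ 2) / c by field; rewrite gt_eqF.
by rewrite pmulr_lge0 ?invr_gt0 // subr_ge0 mulrC.
Qed.

Section Norm1.
Variables (R : rcfType) (m : nat).

Lemma norm1_ge0 (A : 'M[R]_m) : 0 <= norm1 A.
Proof. exact: bigmax_ge_id. Qed.

Lemma qform_le_norm1 (W : 'M[R]_m) (x : 'rV[R]_m) : W^T = W ->
  qform W x <= norm1 W * \sum_i x 0 i ^+ 2.
Proof.
move=> WT; set N := norm1 W; set s := \sum_i x 0 i ^+ 2.
have col_le j : \sum_i `|W i j| <= N by exact: (le_bigmax _ (fun j => \sum_i `|W i j|)).
have row_le i : \sum_j `|W i j| <= N.
  rewrite (eq_bigr (fun j => `|W j i|)) => [|j _]; first exact: col_le.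
  by rewrite -[in LHS]WT mxE.
have weighted_le (c : 'I_m -> R) : (forall k, c k <= N) -> \sum_k x 0 k ^+ 2 * c k <= N * s.
  move=> cN; rewrite /s big_distrr /=; apply: ler_sum => k _.
  by rewrite mulrC ler_wpM2r ?sqr_ge0.
have term_le i j :
    2 * (x 0 i * W i j * x 0 j) <= x 0 i ^+ 2 * `|W i j| + x 0 j ^+ 2 * `|W i j|.
  have := real_normK (num_real (x 0 i)); have := real_normK (num_real (x 0 j)).
  have := sqr_ge0 (`|x 0 i| - `|x 0 j|).
  have : x 0 i * W i j * x 0 j <= `|x 0 i| * `|W i j| * `|x 0 j|.
    by rewrite -!normrM real_ler_norm ?num_real.
  have := normr_ge0 (W i j); nra.
rewrite -(ler_pM2l (ltr0Sn R 1)) qformE big_distrr /=.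
apply: (@le_trans _ _ (\sum_i \sum_j (x 0 i ^+ 2 * `|W i j| + x 0 j ^+ 2 * `|W i j|))).
  by apply: ler_sum => i _; rewrite big_distrr; apply: ler_sum => j _; exact: term_le.
under eq_bigr do rewrite big_split /=.
rewrite big_split /= mulr_natl mulr2n; apply: lerD.
  by under eq_bigr do rewrite -big_distrr /=; exact: weighted_le row_le.
by rewrite exchange_big; under eq_bigr do rewrite -big_distrr /=; exact: weighted_le col_le.
Qed.

End Norm1.

Section InverseForm.
Variables (R : comUnitRingType) (m : nat) (A : 'M[R]_m).
Hypotheses (AT : A^T = A) (A_unit : A \in unitmx).

Lemma invmx_sym : (invmx A)^T = invmx A.
Proof. by rewrite trmx_inv AT. Qed.

Lemma bform_invmx (x : 'rV[R]_m) : bform A x (x *m invmx A) = \sum_i x 0 i ^+ 2.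
Proof.
rewrite /bform trmx_mul invmx_sym mulmxA -(mulmxA x) mulmxV // mulmx1 mxE.
by apply: eq_bigr => i _; rewrite mxE.
Qed.

Lemma qform_invmx (x : 'rV[R]_m) : qform A (x *m invmx A) = qform (invmx A) x.
Proof.
by rewrite /qform -(mulmxA x) mulVmx // mulmx1 trmx_mul invmx_sym mulmxA.
Qed.

End InverseForm.

Lemma sum_sqr_le_norm1_invmx (R : rcfType) (m : nat) (A : 'M[R]_m) (x : 'rV[R]_m) :
  A^T = A -> A \in unitmx -> (forall w, 0 <= qform A w) ->
  \sum_i x 0 i ^+ 2 <= norm1 (invmx A) * qform A x.
Proof.
move=> AT A_unit psdA; set s := \sum_i _; set q := qform A x; set N := norm1 (invmx A).
have := bform_CauchySchwarz x (x *m invmx A) AT psdA.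
rewrite bform_invmx // qform_invmx // -/s -/q => s2_le.
have := qform_le_norm1 x (invmx_sym AT); rewrite -/s -/N => p_le.
have [s0 | s_neq0] := eqVneq s 0; first by rewrite s0 mulr_ge0 ?norm1_ge0 ?psdA.
have s_gt0 : 0 < s by rewrite lt_def s_neq0 sumr_ge0 // => i _; exact: sqr_ge0.
have q_ge0 : 0 <= q := psdA x.
nra.
Qed.

Lemma sqrtr_int_le (R : rcfType) (k : int) : 0 <= k -> Num.sqrt (k%:~R : R) <= k%:~R.
Proof.
rewrite le_eqVlt => /orP[/eqP <- | k_gt0]; first by rewrite sqrtr0.
have k_ge1 : 1 <= k%:~R :> R by rewrite ler1z.
have k_ge0 := le_trans ler01 k_ge1.
by rewrite -{2}(ger0_norm k_ge0) -sqrtr_sqr ler_sqrt ?sqr_ge0 // expr2 ler_peMr.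
Qed.

Lemma qform_map_mx (R S : comNzRingType) (f : {rmorphism R -> S}) (m : nat) (A : 'M[R]_m) x :
  qform (map_mx f A) (map_mx f x) = f (qform A x).
Proof. by rewrite /qform map_trmx -!map_mxM mxE. Qed.

Lemma posdef_qform_ge0 (R : rcfType) (m : nat) (A : 'M[R]_m) :
  posdef A -> forall x, 0 <= qform A x.
Proof.
move=> A_pd x; have [-> | x_neq0] := eqVneq x 0; last exact/ltW/A_pd.
by rewrite /qform !mul0mx mxE.
Qed.

Theorem lemma6p6 (R : rcfType) (m : nat) (V : 'M[int]_m)
  (Hsym : V^T = V)
  (Hunimod : \det V = 1 \/ \det V = -1)
  (Hpd : posdef (map_mx intr V : 'M[R]_m)) :
  forall x : 'rV[int]_m,
    eucl_norm (map_mx intr x : 'rV[R]_m)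
      <= norm1 (invmx (map_mx intr V : 'M[R]_m)) * (qform V x)%:~R.
Proof.
move=> x; set A : 'M[R]_m := map_mx intr V.
have AT : A^T = A by rewrite map_trmx Hsym.
have A_unit : A \in unitmx.
  by rewrite unitmxE det_map_mx; case: Hunimod => ->; rewrite ?rmorphN rmorph1 ?unitrN unitr1.
have sum_sqr_int : \sum_i (map_mx intr x : 'rV[R]_m) 0 i ^+ 2 = (\sum_i x 0 i ^+ 2)%:~R.
  by rewrite rmorph_sum; apply: eq_bigr => i _; rewrite mxE rmorphXn.
rewrite /eucl_norm -qform_map_mx sum_sqr_int.
apply: le_trans (sqrtr_int_le _ _) _; first by apply: sumr_ge0 => i _; exact: sqr_ge0.
by rewrite -sum_sqr_int sum_sqr_le_norm1_invmx //; exact: posdef_qform_ge0.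
Qed.
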